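(* Let $t_1,\dots,t_n$ be basic terms, $\kappa$ a time variable, and $\Delta$ the saturation of the sample set $\{t_1[\kappa],\dots,t_n[\kappa]\}$. Then $\mathbf{W}\not\models\mathrm{id}\le t_1\vee\cdots\vee t_n$ (i.e. there exist a valuation $\theta$ and $p\in\overline\omega$ with $[\![t_i]\!]_\theta(p)<p$ for all $i$) if, and only if, there exists a $\Delta$-diagram $\delta$ such that $\delta(\kappa)>\delta(t_i[\kappa])$ for all $i\in\{1,\dots,n\}$.
   Context: Time warps: $\overline{\omega}=\omega\cup\{\omega\}$ with its natural order; a time warp is a monotone $f\colon\overline\omega\to\overline\omega$ with $f(0)=0$, $f(\omega)=\bigvee_{n\in\omega}f(n)$; $W$ is the set of time warps ordered pointwise, $\vee$ pointwise join, $fg:=f\circ g$, $\mathrm{id}$ identity, $\bot$ constant $0$, $\top$ maps $p\neq0$ to $\omega$. Residuals $\backslash,/$ on $W$ satisfy $f\le h/g\iff fg\le h\iff g\le f\backslash h$; $f^{\ell}:=\mathrm{id}/f$, $f^{r}:=f\backslash\mathrm{id}$, $f^{o}:=\top\backslash f$. $\mathbf{W}$ denotes the time warp algebra $\langle W,\wedge,\vee,\circ,\backslash,/,\mathrm{id},\bot,\top\rangle$. Basic terms: $t,u::=x\mid tu\mid t^{o}\mid t^{\ell}\mid t^{r}\mid\mathrm{id}\mid\bot$ ($x$ a term variable). A valuation $\theta$ maps term variables to $W$; $[\![x]\!]_\theta=\theta(x)$, $[\![tu]\!]_\theta=[\![t]\!]_\theta[\![u]\!]_\theta$, $[\![t^{\star}]\!]_\theta=([\![t]\!]_\theta)^{\star}$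 for $\star\in\{o,\ell,r\}$, $[\![\mathrm{id}]\!]_\theta=\mathrm{id}$, $[\![\bot]\!]_\theta=\bot$. Samples: $\alpha::=\kappa\mid t[\alpha]\mid\mathsf{s}(\alpha)\mid\mathsf{p}(\alpha)\mid\mathsf{last}(t)$ ($\kappa$ a time variable, $t$ a basic term). Relation $\leadsto$: $t[\alpha]\leadsto\alpha$; $\mathsf{s}(\alpha)\leadsto\alpha$; $\mathsf{p}(\alpha)\leadsto\alpha$; $(tu)[\alpha]\leadsto t[u[\alpha]]$; $t^{o}[\alpha]\leadsto t[\alpha]$; $t^{r}[\alpha]\leadsto t[t^{r}[\alpha]], t[\mathsf{s}(t^{r}[\alpha])]$; $t^{\ell}[\alpha]\leadsto t[t^{\ell}[\alpha]], t[\mathsf{p}(t^{\ell}[\alpha])]$; $t[\alpha]\leadsto t[\mathsf{last}(t)]$. The saturation of a sample set is its closure under $\leadsto^{*}$ (reflexive transitive closure). For $p\in\overline\omega$: $p\ominus1=p-1$ if $p\in\omega\setminus\{0\}$, else $p$; $p\oplus1=p+1$ if $p\in\omega$, else $p$. For a saturated sample set $\Delta$, a $\Delta$-diagram is a map $\delta\colon\Delta\to\overline\omega$ such that (all samples mentioned belonging to $\Delta$): (S1) $\delta(\alpha)\le\delta(\beta)\Rightarrow\delta(t[\alpha])\le\delta(t[\beta])$; (S2) $\delta(\alpha)=0\Rightarrow\delta(t[\alpha])=0$; (S3) $\delta(\mathsf{p}(\alpha))=\delta(\alpha)\ominus1$; (S4) $\delta(\mathsf{s}(\alpha))=\delta(\alpha)\oplus1$;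 (S5) for $t[\alpha]\in\Delta$: $\delta(\mathsf{last}(t))\le\delta(\alpha)\iff\delta(t[\alpha])=\delta(t[\mathsf{last}(t)])$; (S6) $\delta(\mathsf{last}(t))=\omega\Rightarrow\delta(t[\mathsf{last}(t)])=\omega$; (L1) $\delta(\mathrm{id}[\alpha])=\delta(\alpha)$; (L2) if $\bot[\alpha]\in\Delta$ then $\delta(\mathsf{last}(\bot))=0$; (L3) $\delta((tu)[\alpha])=\delta(t[u[\alpha]])$; (L4) if $(tu)[\mathsf{last}(tu)]\in\Delta$ and $\delta(\mathsf{last}(tu))=\omega$ then $\delta(\mathsf{last}(t))=\delta(\mathsf{last}(u))=\omega$; (O1) $\delta(t^{o}[\alpha])\in\{0,\omega\}$; (O2) $\delta(\alpha)<\omega\Rightarrow(\delta(t^{o}[\alpha])=\omega\iff\delta(t[\alpha])=\omega)$; (O3) $\delta(\mathsf{last}(t^{o}))<\omega$; (O4) for $t[\alpha],t^{o}[\mathsf{last}(t^{o})]\in\Delta$: if $\delta(t^{o}[\mathsf{last}(t^{o})])<\omega$ and $\delta(\alpha)<\omega$ then $\delta(t[\alpha])<\omega$; (R1) $\delta(t[t^{r}[\alpha]])\le\delta(\alpha)$; (R2) for $t^{r}[\alpha]\in\Delta$: if $0<\delta(\alpha)<\omega$ and $\delta(t^{r}[\alpha])<\omega$ then $\delta(\alpha)<\delta(t[\mathsf{s}(t^{r}[\alpha])])$; (R3) for $t^{r}[\mathsf{last}(t^{r})]\in\Delta$: $\delta(\mathsf{last}(t^{r}))=\omega\Rightarrow\delta(\mathsf{last}(t))=\omega$;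 (R4) for $t^{r}[\mathsf{last}(t^{r})]\in\Delta$: $\delta(t^{r}[\mathsf{last}(t^{r})])<\omega\Rightarrow\delta(t[\mathsf{s}(t^{r}[\mathsf{last}(t^{r})])])=\omega$; (Λ1) for $t[t^{\ell}[\alpha]]\in\Delta$: $\delta(t^{\ell}[\alpha])<\omega\Rightarrow\delta(\alpha)\le\delta(t[t^{\ell}[\alpha]])$; (Λ2) for $t^{\ell}[\alpha]\in\Delta$: if $0<\delta(\alpha)<\omega$ and $\delta(t^{\ell}[\alpha])<\omega$ then $\delta(t[\mathsf{p}(t^{\ell}[\alpha])])<\delta(\alpha)$; (Λ3) for $t[t^{\ell}[\alpha]]\in\Delta$: if $\delta(\alpha)<\omega$ and $\delta(t^{\ell}[\alpha])=\omega$ then $\delta(t[t^{\ell}[\alpha]])<\delta(\alpha)$; (Λ4) for $t^{\ell}[\mathsf{last}(t^{\ell})]\in\Delta$: $\delta(\mathsf{last}(t^{\ell}))=\omega\Rightarrow\delta(\mathsf{last}(t))=\omega$; (Λ5) for $t^{\ell}[\mathsf{last}(t^{\ell})]\in\Delta$: $\delta(t^{\ell}[\mathsf{last}(t^{\ell})])<\omega\Rightarrow\delta(t[t^{\ell}[\mathsf{last}(t^{\ell})]])=\omega$. *)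

From Stdlib Require Import List Relations ClassicalEpsilon.
Import ListNotations.

(** * The ordinal omega-bar = omega + 1 *)
Inductive ob : Type := Fin (n : nat) | Om.

Definition oble (a b : ob) : Prop :=
  match a, b with
  | Fin m, Fin n => m <= n
  | _, Om => True
  | Om, Fin _ => False
  end.

Definition oblt (a b : ob) : Prop := oble a b /\ a <> b.

Definition ominus1 (p : ob) : ob :=
  match p with Fin (S n) => Fin n | _ => p end.
Definition oplus1 (p : ob) : ob :=
  match p with Fin n => Fin (S n) | Om => Om end.

Definition is_warp (f : ob -> ob) : Prop :=
  (forall a b, oble a b -> oble (f a) (f b)) /\
  f (Fin 0) = Fin 0 /\
  (forall n, oble (f (Fin n)) (f Om)) /\
  (forall b, (forall n, oble (f (Fin n)) b) -> oble (f Om) b).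

Definition wle (f g : ob -> ob) : Prop := forall p, oble (f p) (g p).
Definition wcomp (f g : ob -> ob) : ob -> ob := fun p => f (g p).
Definition wid : ob -> ob := fun p => p.
Definition wbot : ob -> ob := fun _ => Fin 0.
Definition wtop : ob -> ob := fun p => match p with Fin 0 => Fin 0 | _ => Om end.

(* Residuals in W, characterised by  f <= h/g <-> fg <= h <-> g <= f\h
   (for f, g, h in W); chosen by Hilbert's epsilon. *)
Definition rdiv (h g : ob -> ob) : ob -> ob :=
  epsilon (inhabits wid)
    (fun x => is_warp x /\
       forall y, is_warp y -> (wle y x <-> wle (wcomp y g) h)).
Definition ldiv (f h : ob -> ob) : ob -> ob :=
  epsilon (inhabits wid)
    (fun x => is_warp x /\
       forall y, is_warp y -> (wle y x <-> wle (wcomp f y) h)).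

Definition wl (f : ob -> ob) := rdiv wid f.
Definition wr (f : ob -> ob) := ldiv f wid.
Definition wo (f : ob -> ob) := ldiv wtop f.

Inductive term : Type :=
| Var (x : nat) | Comp (t u : term) | TO (t : term) | TL (t : term)
| TR (t : term) | Tid | Tbot.

Fixpoint eval (th : nat -> ob -> ob) (t : term) : ob -> ob :=
  match t with
  | Var x => th x
  | Comp t u => wcomp (eval th t) (eval th u)
  | TO t => wo (eval th t)
  | TL t => wl (eval th t)
  | TR t => wr (eval th t)
  | Tid => wid
  | Tbot => wbot
  end.

Inductive sample : Type :=
| Kv (k : nat)
| App (t : term) (a : sample)
| Sc (a : sample)
| Pr (a : sample)
| Last (t : term).

Inductive step : sample -> sample -> Prop :=
| st_app t a : step (App t a) a
| st_sc a : step (Sc a) a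
| st_pr a : step (Pr a) a
| st_comp t u a : step (App (Comp t u) a) (App t (App u a))
| st_o t a : step (App (TO t) a) (App t a)
| st_r1 t a : step (App (TR t) a) (App t (App (TR t) a))
| st_r2 t a : step (App (TR t) a) (App t (Sc (App (TR t) a)))
| st_l1 t a : step (App (TL t) a) (App t (App (TL t) a))
| st_l2 t a : step (App (TL t) a) (App t (Pr (App (TL t) a)))
| st_last t a : step (App t a) (App t (Last t)).

Definition saturation (S : sample -> Prop) : sample -> Prop :=
  fun s => exists b, S b /\ clos_refl_trans sample step b s.

Section Diagram.
Variables (D : sample -> Prop) (d : sample -> ob).

Definition S1 := forall t a b, D (App t a) -> D (App t b) -> D a -> D b ->
  oble (d a) (d b) -> oble (d (App t a)) (d (App t b)).
Definition S2 := forall t a, D (App t a) -> D a ->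
  d a = Fin 0 -> d (App t a) = Fin 0.
Definition S3 := forall a, D (Pr a) -> D a -> d (Pr a) = ominus1 (d a).
Definition S4 := forall a, D (Sc a) -> D a -> d (Sc a) = oplus1 (d a).
Definition S5 := forall t a, D (App t a) -> D a -> D (Last t) ->
  D (App t (Last t)) ->
  (oble (d (Last t)) (d a) <-> d (App t a) = d (App t (Last t))).
Definition S6 := forall t, D (Last t) -> D (App t (Last t)) ->
  d (Last t) = Om -> d (App t (Last t)) = Om.

Definition L1 := forall a, D (App Tid a) -> D a -> d (App Tid a) = d a.
Definition L2 := forall a, D (App Tbot a) -> D (Last Tbot) ->
  d (Last Tbot) = Fin 0.
Definition L3 := forall t u a, D (App (Comp t u) a) -> D (App t (App u a)) ->
  d (App (Comp t u) a) = d (App t (App u a)).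
Definition L4 := forall t u, D (App (Comp t u) (Last (Comp t u))) ->
  D (Last (Comp t u)) -> D (Last t) -> D (Last u) ->
  d (Last (Comp t u)) = Om -> d (Last t) = Om /\ d (Last u) = Om.

Definition O1 := forall t a, D (App (TO t) a) ->
  d (App (TO t) a) = Fin 0 \/ d (App (TO t) a) = Om.
Definition O2 := forall t a, D (App (TO t) a) -> D (App t a) -> D a ->
  oblt (d a) Om -> (d (App (TO t) a) = Om <-> d (App t a) = Om).
Definition O3 := forall t, D (Last (TO t)) -> oblt (d (Last (TO t))) Om.
Definition O4 := forall t a, D (App t a) -> D (App (TO t) (Last (TO t))) ->
  D a -> oblt (d (App (TO t) (Last (TO t)))) Om -> oblt (d a) Om ->
  oblt (d (App t a)) Om.

Definition R1 := forall t a, D (App t (App (TR t) a)) -> D a ->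
  oble (d (App t (App (TR t) a))) (d a).
Definition R2 := forall t a, D (App (TR t) a) -> D a ->
  D (App t (Sc (App (TR t) a))) ->
  oblt (Fin 0) (d a) -> oblt (d a) Om -> oblt (d (App (TR t) a)) Om ->
  oblt (d a) (d (App t (Sc (App (TR t) a)))).
Definition R3 := forall t, D (App (TR t) (Last (TR t))) -> D (Last (TR t)) ->
  D (Last t) -> d (Last (TR t)) = Om -> d (Last t) = Om.
Definition R4 := forall t, D (App (TR t) (Last (TR t))) ->
  D (App t (Sc (App (TR t) (Last (TR t))))) ->
  oblt (d (App (TR t) (Last (TR t)))) Om ->
  d (App t (Sc (App (TR t) (Last (TR t))))) = Om.

Definition La1 := forall t a, D (App t (App (TL t) a)) -> D (App (TL t) a) ->
  D a -> oblt (d (App (TL t) a)) Om -> oble (d a) (d (App t (App (TL t) a))).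
Definition La2 := forall t a, D (App (TL t) a) -> D a ->
  D (App t (Pr (App (TL t) a))) ->
  oblt (Fin 0) (d a) -> oblt (d a) Om -> oblt (d (App (TL t) a)) Om ->
  oblt (d (App t (Pr (App (TL t) a)))) (d a).
Definition La3 := forall t a, D (App t (App (TL t) a)) -> D a ->
  D (App (TL t) a) -> oblt (d a) Om -> d (App (TL t) a) = Om ->
  oblt (d (App t (App (TL t) a))) (d a).
Definition La4 := forall t, D (App (TL t) (Last (TL t))) -> D (Last (TL t)) ->
  D (Last t) -> d (Last (TL t)) = Om -> d (Last t) = Om.
Definition La5 := forall t, D (App (TL t) (Last (TL t))) ->
  D (App t (App (TL t) (Last (TL t)))) ->
  oblt (d (App (TL t) (Last (TL t)))) Om ->
  d (App t (App (TL t) (Last (TL t)))) = Om.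

Definition is_diagram : Prop :=
  S1 /\ S2 /\ S3 /\ S4 /\ S5 /\ S6 /\ L1 /\ L2 /\ L3 /\ L4 /\
  O1 /\ O2 /\ O3 /\ O4 /\ R1 /\ R2 /\ R3 /\ R4 /\
  La1 /\ La2 /\ La3 /\ La4 /\ La5.
End Diagram.

(* If [t_i(p) < p] for all [i] under a valuation, evaluating every sample under
   that valuation, with [last(t)] the least point at which [t] attains its value
   at omega, gives a diagram: each diagram condition is a property of time warps
   and their residuals, and the residuals can be read off pointwise.
   Conversely, the saturation of [{t_i[k]}] is finite, so the finite values of a
   diagram [d] are bounded. Interpolating each variable [x] by the supremum of
   the values [d(x[a])] with [d(a)] below the argument gives time warps, and an
   induction on terms shows that every term maps [d(a)] to [d(t[a])]: at finite
   arguments the diagram conditions pin down the residuals exactly, and at omega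
   they are determined through [last]. Then [p := d(k)] is a counterexample. *)

From Stdlib Require Import List Relations ClassicalEpsilon Classical Lia PeanoNat Wf_nat.
Import ListNotations.

Lemma oble_refl a : oble a a.
Proof. destruct a; simpl; auto. Qed.

Lemma oble_trans a b c : oble a b -> oble b c -> oble a c.
Proof. destruct a, b, c; simpl; tauto || lia. Qed.

Lemma oble_antisym a b : oble a b -> oble b a -> a = b.
Proof. destruct a, b; simpl; intros; try tauto; f_equal; lia. Qed.

Lemma oble_total a b : oble a b \/ oble b a.
Proof. destruct a, b; simpl; auto; lia. Qed.

Lemma oble_Om a : oble a Om.
Proof. destruct a; simpl; auto. Qed.

Lemma oble_0 a : oble (Fin 0) a.
Proof. destruct a; simpl; auto; lia. Qed.

Lemma Om_oble a : oble Om a -> a = Om.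
Proof. destruct a; simpl; tauto. Qed.

Lemma oble_0_eq a : oble a (Fin 0) -> a = Fin 0.
Proof. destruct a; simpl; intros; [f_equal; lia | tauto]. Qed.

Lemma oblt_nle a b : oblt a b <-> ~ oble b a.
Proof.
  unfold oblt; split.
  - intros [Hab Hneq] Hba. apply Hneq, oble_antisym; auto.
  - intros H. destruct (oble_total a b); [|tauto].
    split; auto. intros ->. apply H, oble_refl.
Qed.

Lemma oblt_Fin_Om n : oblt (Fin n) Om.
Proof. split; [exact I | discriminate]. Qed.

Lemma ob_Fin_or_Om a : (exists n, a = Fin n) \/ a = Om.
Proof. destruct a; eauto. Qed.

Lemma oblt_Om_Fin a : oblt a Om -> exists n, a = Fin n.
Proof. destruct a as [n|]; [eauto | intros [_ []]; auto]. Qed.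

Lemma Fin_S_oble_iff j a : oble (Fin (S j)) a <-> ~ oble a (Fin j).
Proof. destruct a; simpl; lia || tauto. Qed.

Lemma oble_Fin_iff a j : oble a (Fin j) <-> ~ oble (Fin (S j)) a.
Proof. destruct a; simpl; lia || tauto. Qed.

Lemma Fin_oble_all a : (forall n, oble (Fin n) a) -> a = Om.
Proof. destruct a; auto. intros H. specialize (H (S n)); simpl in H; lia. Qed.

Lemma ob_le_ext a b : (forall v, oble v a <-> oble v b) -> a = b.
Proof. intros H. apply oble_antisym; apply H, oble_refl. Qed.

Lemma nat_least_exists (P : nat -> Prop) :
  (exists n, P n) -> exists n, P n /\ forall m, P m -> n <= m.
Proof.
  intros H.
  destruct (dec_inh_nat_subset_has_unique_least_element P (fun n => classic (P n)) H)
    as [n [Hn _]].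
  exists n; exact Hn.
Qed.

(** * Time warps *)

Section Warp.
Variable f : ob -> ob.
Hypothesis Hf : is_warp f.

Lemma warp_mono a b : oble a b -> oble (f a) (f b).
Proof. apply Hf. Qed.

Lemma warp_0 : f (Fin 0) = Fin 0.
Proof. apply Hf. Qed.

Lemma warp_le_Om a : oble (f a) (f Om).
Proof. apply warp_mono, oble_Om. Qed.

Lemma warp_Om_of_eq_Om a : f a = Om -> f Om = Om.
Proof. intros H. apply Om_oble. rewrite <- H at 1. apply warp_le_Om. Qed.

Lemma warp_Om_le b : (forall n, oble (f (Fin n)) b) -> oble (f Om) b.
Proof. apply Hf. Qed.

Lemma warp_Om_approx c : oble (Fin c) (f Om) -> exists n, oble (Fin c) (f (Fin n)).
Proof.
  intros H. destruct c as [|c]; [exists 0; apply oble_0|].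
  apply NNPP; intros N.
  assert (Hc : oble (f Om) (Fin c)).
  { apply warp_Om_le. intros n. apply oble_Fin_iff. eauto. }
  pose proof (oble_trans _ _ _ H Hc). simpl in *; lia.
Qed.

Lemma warp_Om_Fin m : f Om = Fin m -> exists n, f (Fin n) = Fin m.
Proof.
  intros H. destruct (warp_Om_approx m) as [n Hn]; [rewrite H; apply oble_refl|].
  exists n. apply oble_antisym; auto. rewrite <- H. apply warp_le_Om.
Qed.
End Warp.

Lemma warp_comp f g : is_warp f -> is_warp g -> is_warp (wcomp f g).
Proof.
  intros Hf Hg. unfold wcomp. split; [|split; [|split]].
  - intros a b H. apply (warp_mono f Hf), (warp_mono g Hg), H.
  - rewrite (warp_0 g Hg). apply (warp_0 f Hf).
  - intros n. apply (warp_mono f Hf), (warp_le_Om g Hg).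
  - intros b Hb. destruct (g Om) as [m|] eqn:E.
    + destruct (warp_Om_Fin g Hg m E) as [n Hn]. rewrite <- Hn. apply Hb.
    + apply (warp_Om_le f Hf). intros n.
      destruct (warp_Om_approx g Hg n) as [m Hm]; [rewrite E; exact I|].
      apply (oble_trans _ _ _ (warp_mono f Hf _ _ Hm)), Hb.
Qed.

Lemma warp_id : is_warp wid.
Proof.
  unfold wid; split; [|split; [|split]]; auto using oble_Om.
  intros b Hb. rewrite (Fin_oble_all b Hb). exact I.
Qed.

Lemma warp_bot : is_warp wbot.
Proof. unfold wbot; split; [|split; [|split]]; auto using oble_refl, oble_0. Qed.

Lemma warp_top : is_warp wtop.
Proof.
  unfold wtop; split; [|split; [|split]]; auto.
  - intros [[|a]|] [[|b]|]; simpl; intros; auto; lia.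
  - intros [|n]; exact I.
  - intros b Hb. exact (Hb 1).
Qed.

(** * Suprema and residuals *)

Lemma ob_sup_exists (P : ob -> Prop) :
  exists s, (forall a, P a -> oble a s) /\
            (forall b, (forall a, P a -> oble a b) -> oble s b).
Proof.
  destruct (classic (exists n, forall a, P a -> oble a (Fin n))) as [Hb|N].
  - destruct (nat_least_exists _ Hb) as [n [Hn Hmin]].
    exists (Fin n). split; auto. intros [j|] Hj; [|exact I]. apply Hmin, Hj.
  - exists Om. split; [intros; apply oble_Om|].
    intros [j|] Hj; [exfalso; eauto | exact I].
Qed.

Definition ob_sup (P : ob -> Prop) : ob :=
  proj1_sig (constructive_indefinite_description _ (ob_sup_exists P)).

Lemma ob_sup_spec P : (forall a, P a -> oble a (ob_sup P)) /\
  (forall b, (forall a, P a -> oble a b) -> oble (ob_sup P) b).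
Proof. unfold ob_sup. destruct constructive_indefinite_description; auto. Qed.

Lemma ob_le_sup (P : ob -> Prop) a : P a -> oble a (ob_sup P).
Proof. apply ob_sup_spec. Qed.

Lemma ob_sup_le (P : ob -> Prop) b : (forall a, P a -> oble a b) -> oble (ob_sup P) b.
Proof. apply ob_sup_spec. Qed.

Lemma ob_sup_approx (P : ob -> Prop) n :
  oble (Fin (S n)) (ob_sup P) -> exists a, P a /\ oble (Fin (S n)) a.
Proof.
  intros H. apply NNPP. intros N. apply Fin_S_oble_iff in H. apply H.
  apply ob_sup_le. intros a Ha. apply oble_Fin_iff. eauto.
Qed.

Lemma warp_ob_sup_le f (P : ob -> Prop) c : is_warp f ->
  (forall a, P a -> oble (f a) c) -> oble (f (ob_sup P)) c.
Proof.
  intros Hf H. destruct (ob_sup P) as [[|m]|] eqn:E.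
  - rewrite (warp_0 f Hf). apply oble_0.
  - destruct (ob_sup_approx P m) as [a [Ha Hma]]; [rewrite E; apply oble_refl|].
    replace (Fin (S m)) with a; auto.
    apply oble_antisym; auto. rewrite <- E. apply ob_le_sup, Ha.
  - apply (warp_Om_le f Hf). intros n.
    destruct (ob_sup_approx P n) as [a [Ha Hna]]; [rewrite E; exact I|].
    apply (oble_trans _ (f a)); auto. apply (warp_mono f Hf).
    apply (oble_trans _ (Fin (S n))); auto. simpl; lia.
Qed.

Definition warp_sup (C : (ob -> ob) -> Prop) : ob -> ob :=
  fun p => ob_sup (fun a => exists y, is_warp y /\ C y /\ a = y p).

Lemma le_warp_sup C y : is_warp y -> C y -> wle y (warp_sup C).
Proof. intros Hy Cy p. apply ob_le_sup. eauto. Qed.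

Lemma warp_sup_warp C : is_warp (warp_sup C).
Proof.
  unfold warp_sup. split; [|split; [|split]].
  - intros a b Hab. apply ob_sup_le. intros v [y [Hy [Cy ->]]].
    apply (oble_trans _ (y b)); [apply (warp_mono y Hy _ _ Hab)|].
    apply le_warp_sup; auto.
  - apply oble_0_eq, ob_sup_le. intros v [y [Hy [Cy ->]]].
    rewrite (warp_0 y Hy). apply oble_refl.
  - intros n. apply ob_sup_le. intros v [y [Hy [Cy ->]]].
    apply (oble_trans _ (y Om)); [apply (warp_le_Om y Hy)|].
    apply le_warp_sup; auto.
  - intros b Hb. apply ob_sup_le. intros v [y [Hy [Cy ->]]].
    apply (warp_Om_le y Hy). intros n.
    apply (oble_trans _ _ _ (le_warp_sup C y Hy Cy (Fin n))), Hb.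
Qed.

(* A residual is the pointwise supremum of the warps satisfying its defining
   inequality; for [f \ h] this uses that [f] preserves suprema. *)
Lemma ldiv_spec f h : is_warp f -> is_warp (ldiv f h) /\
  forall y, is_warp y -> (wle y (ldiv f h) <-> wle (wcomp f y) h).
Proof.
  intros Hf. unfold ldiv. apply epsilon_spec.
  exists (warp_sup (fun y => wle (wcomp f y) h)). split; [apply warp_sup_warp|].
  intros y Hy. split; [|intros; apply le_warp_sup; auto].
  intros Hle p. unfold wcomp.
  apply (oble_trans _ _ _ (warp_mono f Hf _ _ (Hle p))).
  apply (warp_ob_sup_le f _ _ Hf). intros a [z [Hz [Cz ->]]]. apply Cz.
Qed.

Lemma rdiv_spec h g : is_warp (rdiv h g) /\
  forall y, is_warp y -> (wle y (rdiv h g) <-> wle (wcomp y g) h).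
Proof.
  unfold rdiv. apply epsilon_spec.
  exists (warp_sup (fun y => wle (wcomp y g) h)). split; [apply warp_sup_warp|].
  intros y Hy. split; [|intros; apply le_warp_sup; auto].
  intros Hle p. unfold wcomp. apply (oble_trans _ _ _ (Hle (g p))).
  apply ob_sup_le. intros a [z [Hz [Cz ->]]]. apply Cz.
Qed.

Lemma wr_warp f : is_warp f -> is_warp (wr f).
Proof. intros Hf. apply (ldiv_spec f wid Hf). Qed.

Lemma wl_warp f : is_warp (wl f).
Proof. apply (rdiv_spec wid f). Qed.

Lemma wo_warp f : is_warp f -> is_warp (wo f).
Proof. intros Hf. apply (ldiv_spec wtop f warp_top). Qed.

Lemma eval_warp th t : (forall x, is_warp (th x)) -> is_warp (eval th t).
Proof.
  intros Hth. induction t; simpl;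
    auto using warp_comp, wo_warp, wr_warp, wl_warp, warp_id, warp_bot.
Qed.

(* Testing the residual inequalities against step functions reads the residuals
   off pointwise. *)
Definition step_warp (q : nat) (v r : ob) : ob :=
  match r with Om => v | Fin m => if Nat.leb q m then v else Fin 0 end.

Lemma step_warp_above q v r : oble (Fin q) r -> step_warp q v r = v.
Proof. destruct r; simpl; auto. intros H. apply Nat.leb_le in H. rewrite H; auto. Qed.

Lemma step_warp_below q v r : ~ oble (Fin q) r -> step_warp q v r = Fin 0.
Proof.
  destruct r; simpl; [|tauto]. intros H.
  destruct (Nat.leb q n) eqn:E; auto. apply Nat.leb_le in E; tauto.
Qed.

Lemma step_warp_warp q v : 1 <= q -> is_warp (step_warp q v).
Proof.
  intros Hq. split; [|split; [|split]].
  - intros a b Hab. destruct (classic (oble (Fin q) a)) as [Ha|Ha].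
    + rewrite !step_warp_above; eauto using oble_refl, oble_trans.
    + rewrite (step_warp_below _ _ _ Ha). apply oble_0.
  - apply step_warp_below. simpl; lia.
  - intros n. destruct (classic (oble (Fin q) (Fin n))) as [Hn|Hn].
    + rewrite step_warp_above; auto. apply oble_refl.
    + rewrite step_warp_below; auto. apply oble_0.
  - intros b Hb. specialize (Hb q). rewrite step_warp_above in Hb; auto.
    apply oble_refl.
Qed.

Lemma step_warp_le x q v : is_warp x -> 1 <= q ->
  (wle (step_warp q v) x <-> oble v (x (Fin q))).
Proof.
  intros Hx Hq. split.
  - intros H. specialize (H (Fin q)). rewrite step_warp_above in H; auto.
    apply oble_refl.
  - intros H r. destruct (classic (oble (Fin q) r)) as [Hr|Hr].
    + rewrite step_warp_above; auto. eauto using oble_trans, warp_mono.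
    + rewrite step_warp_below; auto. apply oble_0.
Qed.

Lemma le_ldiv_iff f h q v : is_warp f -> 1 <= q ->
  (oble v (ldiv f h (Fin q)) <-> forall r, oble (f (step_warp q v r)) (h r)).
Proof.
  intros Hf Hq. rewrite <- step_warp_le; auto; [|apply ldiv_spec; auto].
  apply ldiv_spec, step_warp_warp; auto.
Qed.

Lemma le_rdiv_iff h g q v : 1 <= q ->
  (oble v (rdiv h g (Fin q)) <-> forall r, oble (step_warp q v (g r)) (h r)).
Proof.
  intros Hq. rewrite <- step_warp_le; auto; [|apply rdiv_spec].
  apply rdiv_spec, step_warp_warp; auto.
Qed.

Lemma le_wr_iff f p v : is_warp f ->
  (oble v (wr f (Fin (S p))) <-> oble (f v) (Fin (S p))).
Proof.
  intros Hf. unfold wr. rewrite le_ldiv_iff by (auto; lia).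
  unfold wid. split.
  - intros H. specialize (H (Fin (S p))). rewrite step_warp_above in H; auto.
    apply oble_refl.
  - intros H r. destruct (classic (oble (Fin (S p)) r)) as [Hr|Hr].
    + rewrite step_warp_above; eauto using oble_trans.
    + rewrite step_warp_below, (warp_0 f Hf); auto. apply oble_0.
Qed.

Lemma le_wl_iff f p v :
  (oble v (wl f (Fin (S p))) <-> forall r, oble (Fin (S p)) (f r) -> oble v r).
Proof.
  unfold wl. rewrite le_rdiv_iff by lia. unfold wid. split.
  - intros H r Hr. specialize (H r). rewrite step_warp_above in H; auto.
  - intros H r. destruct (classic (oble (Fin (S p)) (f r))) as [Hr|Hr].
    + rewrite step_warp_above; auto.
    + rewrite step_warp_below; auto. apply oble_0.
Qed.

Lemma le_wo_iff f p v : is_warp f ->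
  (oble v (wo f (Fin (S p))) <-> v = Fin 0 \/ f (Fin (S p)) = Om).
Proof.
  intros Hf. unfold wo. rewrite le_ldiv_iff by (auto using warp_top; lia).
  split.
  - intros H. destruct v as [[|n]|]; auto; right; apply Om_oble;
      specialize (H (Fin (S p))); rewrite step_warp_above in H;
      auto using oble_refl.
  - intros [->|H] r; destruct (classic (oble (Fin (S p)) r)) as [Hr|Hr];
      try (rewrite step_warp_below; auto; apply oble_0).
    + rewrite step_warp_above; auto. apply oble_0.
    + replace (f r) with Om; [apply oble_Om|].
      symmetry. apply Om_oble. rewrite <- H. apply (warp_mono f Hf), Hr.
Qed.

Lemma wo_Fin_Om f n : is_warp f -> f (Fin n) = Om -> wo f (Fin n) = Om.
Proof.
  intros Hf H. destruct n as [|n]; [rewrite (warp_0 f Hf) in H; discriminate|].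
  apply Om_oble, le_wo_iff; auto.
Qed.

Lemma wo_Fin_0 f n : is_warp f -> f (Fin n) <> Om -> wo f (Fin n) = Fin 0.
Proof.
  intros Hf H. destruct n as [|n]; [apply (warp_0 _ (wo_warp f Hf))|].
  destruct (proj1 (le_wo_iff f n _ Hf) (oble_refl _)); tauto.
Qed.

Lemma wo_Fin_Om_iff f n : is_warp f -> (wo f (Fin n) = Om <-> f (Fin n) = Om).
Proof.
  intros Hf. split; [|apply wo_Fin_Om; auto].
  intros H. apply NNPP. intros N. rewrite wo_Fin_0 in H; auto. discriminate.
Qed.

Lemma wo_Om_0 f : is_warp f -> (forall n, f (Fin n) <> Om) -> wo f Om = Fin 0.
Proof.
  intros Hf H. apply oble_0_eq, (warp_Om_le _ (wo_warp f Hf)). intros n.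
  rewrite wo_Fin_0; auto. apply oble_refl.
Qed.

Lemma wo_0_or_Om f a : is_warp f -> wo f a = Fin 0 \/ wo f a = Om.
Proof.
  intros Hf. destruct a as [n|].
  - destruct (classic (f (Fin n) = Om)).
    + right. apply wo_Fin_Om; auto.
    + left. apply wo_Fin_0; auto.
  - destruct (classic (exists n, f (Fin n) = Om)) as [[n Hn]|N].
    + right. apply (warp_Om_of_eq_Om _ (wo_warp f Hf) (Fin n)), wo_Fin_Om; auto.
    + left. apply wo_Om_0; eauto.
Qed.

Lemma wl_Om_Fin f Q : is_warp f -> wl f Om = Fin Q -> f (Fin Q) = Om.
Proof.
  intros Hf H. apply Fin_oble_all. intros n.
  apply (oble_trans _ (Fin (S n))); [simpl; lia|].
  assert (Hn : ~ oble (Fin (S Q)) (wl f (Fin (S n)))).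
  { rewrite Fin_S_oble_iff, <- H. intros C. apply C, (warp_le_Om _ (wl_warp f)). }
  rewrite le_wl_iff in Hn. apply NNPP. intros C. apply Hn. intros r Hr.
  apply Fin_S_oble_iff. intros Hr'. apply C.
  apply (oble_trans _ _ _ Hr), (warp_mono f Hf _ _ Hr').
Qed.

(** * Last points *)

(* The value of the sample [last(t)] is the [q] with [is_last (eval th t) q]. *)
Definition is_last (f : ob -> ob) (q : ob) : Prop :=
  f q = f Om /\ forall r, f r = f Om -> oble q r.

Lemma is_last_exists f : exists q, is_last f q.
Proof.
  destruct (classic (exists n, f (Fin n) = f Om)) as [H|N].
  - destruct (nat_least_exists _ H) as [n [Hn Hmin]]. exists (Fin n).
    split; auto. intros [m|] Hm; simpl; auto.
  - exists Om. split; auto. intros [m|] Hm; simpl; eauto.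
Qed.

Definition last_point (f : ob -> ob) : ob :=
  proj1_sig (constructive_indefinite_description _ (is_last_exists f)).

Lemma last_point_spec f : is_last f (last_point f).
Proof. unfold last_point. destruct constructive_indefinite_description; auto. Qed.

Lemma is_last_Om_iff f : is_last f Om <-> forall n, f (Fin n) <> f Om.
Proof.
  split.
  - intros [_ H] n E. exact (H _ E).
  - intros H. split; [reflexivity|]. intros [n|] E; [exfalso; exact (H n E) | exact I].
Qed.

Lemma is_last_Fin f n : is_last f (Fin n) -> f (Fin n) = f Om.
Proof. intros [H _]; exact H. Qed.

Lemma is_last_Om f : is_warp f -> is_last f Om -> f Om = Om.
Proof.
  intros Hf. rewrite is_last_Om_iff. intros H. destruct (f Om) as [m|] eqn:E; auto.
  destruct (warp_Om_Fin f Hf m E) as [n Hn]. exfalso. apply (H n). congruence.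
Qed.

Section Conditions.
Variable f : ob -> ob.
Hypothesis Hf : is_warp f.

Lemma is_last_le_iff q a : is_last f q -> (oble q a <-> f a = f q).
Proof.
  intros [H1 H2]. split.
  - intros H. apply oble_antisym; [rewrite H1; apply (warp_le_Om f Hf)|].
    apply (warp_mono f Hf); auto.
  - intros H. apply H2. congruence.
Qed.

Lemma is_last_comp_Om g qf qg : is_warp g -> is_last (wcomp f g) Om ->
  is_last f qf -> is_last g qg -> qf = Om /\ qg = Om.
Proof.
  intros Hg Hfg Hqf Hqg.
  pose proof (is_last_Om_iff (wcomp f g)) as [Hfin _]. specialize (Hfin Hfg).
  assert (FO := is_last_Om _ (warp_comp f g Hf Hg) Hfg). unfold wcomp in *.
  assert (Eg : qg = Om).
  { destruct qg as [n|]; auto. exfalso. apply (Hfin n).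
    rewrite (is_last_Fin g n Hqg). reflexivity. }
  subst qg. split; auto.
  destruct qf as [m|]; auto. exfalso.
  assert (GO := is_last_Om g Hg Hqg).
  destruct (warp_Om_approx g Hg m) as [n Hn]; [rewrite GO; exact I|].
  apply (Hfin n). rewrite FO; auto. apply Om_oble. rewrite <- FO, GO; auto.
  rewrite <- (is_last_Fin f m Hqf). apply (warp_mono f Hf), Hn.
Qed.

Lemma is_last_wo q : is_last (wo f) q -> oblt q Om.
Proof.
  intros Hq. apply oblt_nle. intros Hle. apply Om_oble in Hle. subst q.
  assert (HO := is_last_Om _ (wo_warp f Hf) Hq).
  destruct (warp_Om_approx _ (wo_warp f Hf) 1) as [n Hn]; [rewrite HO; exact I|].
  apply is_last_Om_iff with (n := n) in Hq. apply Hq. rewrite HO.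
  destruct (wo_0_or_Om f (Fin n) Hf) as [E|E]; auto. rewrite E in Hn. simpl in Hn; lia.
Qed.

Lemma wo_last_fin q a : is_last (wo f) q -> oblt (wo f q) Om -> oblt a Om ->
  oblt (f a) Om.
Proof.
  intros [Hq _] Hlt Ha. rewrite Hq in Hlt.
  destruct (wo_0_or_Om f Om Hf) as [E|E]; [|rewrite E in Hlt; destruct Hlt; tauto].
  destruct (oblt_Om_Fin _ Ha) as [n ->].
  apply oblt_nle. intros C. apply Om_oble, (wo_Fin_Om f n Hf) in C.
  pose proof (warp_le_Om _ (wo_warp f Hf) (Fin n)) as W. rewrite C, E in W. exact W.
Qed.

Lemma comp_wr_le a : oble (f (wr f a)) a.
Proof.
  destruct a as [[|p]|].
  - rewrite (warp_0 _ (wr_warp f Hf)), (warp_0 f Hf). apply oble_refl.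
  - apply le_wr_iff; auto. apply oble_refl.
  - apply oble_Om.
Qed.

Lemma lt_comp_wr_succ a : oblt (Fin 0) a -> oblt a Om -> oblt (wr f a) Om ->
  oblt a (f (oplus1 (wr f a))).
Proof.
  intros H0 Ha Hw. destruct (oblt_Om_Fin _ Ha) as [[|p] ->]; [destruct H0; tauto|].
  destruct (oblt_Om_Fin _ Hw) as [q Eq]. rewrite Eq. simpl.
  apply oblt_nle. intros C. apply le_wr_iff in C; auto. rewrite Eq in C. simpl in C; lia.
Qed.

Lemma is_last_wr_Om qf : is_last (wr f) Om -> is_last f qf -> qf = Om.
Proof.
  intros Hw Hqf. assert (WO := is_last_Om _ (wr_warp f Hf) Hw).
  rewrite is_last_Om_iff, WO in Hw.
  destruct qf as [m|]; auto. exfalso. apply is_last_Fin in Hqf.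
  destruct (f Om) as [c|] eqn:FO.
  - apply (Hw (S c)). apply Om_oble, le_wr_iff; auto.
    rewrite FO. simpl; lia.
  - assert (Hm : oble (wr f Om) (Fin m)).
    { apply (warp_Om_le _ (wr_warp f Hf)). intros [|n].
      - rewrite (warp_0 _ (wr_warp f Hf)). apply oble_0.
      - apply oble_Fin_iff. rewrite le_wr_iff by auto. intros C.
        assert (Hmono : oble (f (Fin m)) (f (Fin (S m)))).
        { apply (warp_mono f Hf). simpl; lia. }
        rewrite Hqf in Hmono. exact (oble_trans _ _ _ Hmono C). }
    rewrite WO in Hm. exact Hm.
Qed.

Lemma wr_last_succ_Om q : is_last (wr f) q -> oblt (wr f q) Om ->
  f (oplus1 (wr f q)) = Om.
Proof.
  intros [Hq _] Hlt. rewrite Hq in *.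
  destruct (oblt_Om_Fin _ Hlt) as [Q EQ]. rewrite EQ. simpl.
  destruct (f (Fin (S Q))) as [c|] eqn:Fc; auto. exfalso.
  assert (H : oble (Fin (S Q)) (wr f (Fin (S c)))).
  { apply le_wr_iff; auto. rewrite Fc. simpl; lia. }
  pose proof (oble_trans _ _ _ H (warp_le_Om _ (wr_warp f Hf) _)) as C.
  rewrite EQ in C. simpl in C; lia.
Qed.

Lemma le_comp_wl a : oblt (wl f a) Om -> oble a (f (wl f a)).
Proof.
  intros Hw. destruct (oblt_Om_Fin _ Hw) as [q Eq]. destruct a as [[|p]|].
  - apply oble_0.
  - assert (H : ~ oble (Fin (S q)) (wl f (Fin (S p)))) by (rewrite Eq; simpl; lia).
    rewrite le_wl_iff in H. apply NNPP. intros C. apply H. intros r Hr.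
    apply Fin_S_oble_iff. intros Hrq. apply C. rewrite Eq.
    apply (oble_trans _ _ _ Hr), (warp_mono f Hf), Hrq.
  - rewrite Eq, (wl_Om_Fin f q Hf Eq). apply oble_refl.
Qed.

Lemma comp_wl_pred_lt a : oblt (Fin 0) a -> oblt a Om -> oblt (wl f a) Om ->
  oblt (f (ominus1 (wl f a))) a.
Proof.
  intros H0 Ha Hw. destruct (oblt_Om_Fin _ Ha) as [[|p] ->]; [destruct H0; tauto|].
  destruct (oblt_Om_Fin _ Hw) as [[|q] Eq]; rewrite Eq; simpl.
  - rewrite (warp_0 f Hf). apply oblt_nle. simpl; lia.
  - apply oblt_nle. intros C.
    assert (H : oble (Fin (S q)) (wl f (Fin (S p)))) by (rewrite Eq; apply oble_refl).
    rewrite le_wl_iff in H. apply H in C. simpl in C; lia.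
Qed.

Lemma comp_wl_Om_lt a : oblt a Om -> wl f a = Om -> oblt (f (wl f a)) a.
Proof.
  intros Ha Hw. rewrite Hw. destruct (oblt_Om_Fin _ Ha) as [[|p] ->].
  - rewrite (warp_0 _ (wl_warp f)) in Hw. discriminate.
  - apply oblt_nle. intros C. destruct (warp_Om_approx f Hf (S p) C) as [n Hn].
    assert (H : oble Om (wl f (Fin (S p)))) by (rewrite Hw; exact I).
    rewrite le_wl_iff in H. apply H in Hn. exact Hn.
Qed.

Lemma is_last_wl_Om qf : is_last (wl f) Om -> is_last f qf -> qf = Om.
Proof.
  intros Hw Hqf. assert (WO := is_last_Om _ (wl_warp f) Hw).
  rewrite is_last_Om_iff, WO in Hw.
  destruct qf as [m|]; auto. exfalso. apply is_last_Fin in Hqf.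
  destruct (f Om) as [c|] eqn:FO.
  - apply (Hw (S c)). apply Om_oble, le_wl_iff. intros r Hr.
    pose proof (oble_trans _ _ _ Hr (warp_le_Om f Hf r)) as C.
    rewrite FO in C. simpl in C; lia.
  - assert (Hm : oble (wl f Om) (Fin m)).
    { apply (warp_Om_le _ (wl_warp f)). intros [|n].
      - rewrite (warp_0 _ (wl_warp f)). apply oble_0.
      - apply (proj1 (le_wl_iff f n _) (oble_refl _)). rewrite Hqf. apply oble_Om. }
    rewrite WO in Hm. exact Hm.
Qed.

Lemma wl_last_Om q : is_last (wl f) q -> oblt (wl f q) Om -> f (wl f q) = Om.
Proof.
  intros [Hq _] Hlt. rewrite Hq in *.
  destruct (oblt_Om_Fin _ Hlt) as [Q EQ]. rewrite EQ. apply wl_Om_Fin; auto.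
Qed.
End Conditions.

(** * From valuations to diagrams *)

Section Realization.
Variables (th : nat -> ob -> ob) (p : ob).
Hypothesis Hth : forall x, is_warp (th x).

Fixpoint sample_value (s : sample) : ob :=
  match s with
  | Kv _ => p
  | App t a => eval th t (sample_value a)
  | Sc a => oplus1 (sample_value a)
  | Pr a => ominus1 (sample_value a)
  | Last t => last_point (eval th t)
  end.

Lemma sample_value_diagram D : is_diagram D sample_value.
Proof.
  pose proof (fun t => eval_warp th t Hth) as W.
  pose proof (fun t => last_point_spec (eval th t)) as L. simpl in L.
  unfold is_diagram; repeat match goal with |- _ /\ _ => split end.
  all: red; simpl.
  - intros t a b _ _ _ _ Hab. apply (warp_mono _ (W t)), Hab.
  - intros t a _ _ Ha. rewrite Ha. apply (warp_0 _ (W t)).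
  - reflexivity.
  - reflexivity.
  - intros t a _ _ _ _. apply (is_last_le_iff _ (W t)), L.
  - intros t _ _ HO. rewrite HO. apply (is_last_Om _ (W t)).
    rewrite <- HO. apply L.
  - reflexivity.
  - intros a _ _. apply oble_0_eq, (proj2 (L Tbot)). reflexivity.
  - reflexivity.
  - intros t u _ _ _ _ HO. apply (is_last_comp_Om _ (W t) _ _ _ (W u)); auto.
    rewrite <- HO. apply (L (Comp t u)).
  - intros t a _. apply wo_0_or_Om, W.
  - intros t a _ _ _ Ha. destruct (oblt_Om_Fin _ Ha) as [n ->].
    apply wo_Fin_Om_iff, W.
  - intros t _. apply (is_last_wo _ (W t)), (L (TO t)).
  - intros t a _ _ _. apply (wo_last_fin _ (W t) _ _ (L (TO t))).
  - intros t a _ _. apply comp_wr_le, W.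
  - intros t a _ _ _. apply lt_comp_wr_succ, W.
  - intros t _ _ _ HO. apply (is_last_wr_Om _ (W t)); auto.
    rewrite <- HO. apply (L (TR t)).
  - intros t _ _. apply (wr_last_succ_Om _ (W t)), (L (TR t)).
  - intros t a _ _ _. apply le_comp_wl, W.
  - intros t a _ _ _. apply comp_wl_pred_lt, W.
  - intros t a _ _ _. apply comp_wl_Om_lt, W.
  - intros t _ _ _ HO. apply (is_last_wl_Om _ (W t)); auto.
    rewrite <- HO. apply (L (TL t)).
  - intros t _ _. apply (wl_last_Om _ (W t)), (L (TL t)).
Qed.
End Realization.


(** * Finiteness of saturations *)

Fixpoint reach (t : term) (a : sample) {struct t} : list sample :=
  let below b :=
    match t with
    | Comp t1 u => reach t1 (App u b) ++ reach u b
    | TO t1 => reach t1 b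
    | TR t1 => reach t1 (App (TR t1) b) ++ reach t1 (Sc (App (TR t1) b))
    | TL t1 => reach t1 (App (TL t1) b) ++ reach t1 (Pr (App (TL t1) b))
    | _ => []
    end in
  App t a :: a :: App t (Last t) :: Last t :: below a ++ below (Last t).

Definition reach_below (t : term) (b : sample) : list sample :=
  match t with
  | Comp t1 u => reach t1 (App u b) ++ reach u b
  | TO t1 => reach t1 b
  | TR t1 => reach t1 (App (TR t1) b) ++ reach t1 (Sc (App (TR t1) b))
  | TL t1 => reach t1 (App (TL t1) b) ++ reach t1 (Pr (App (TL t1) b))
  | _ => []
  end.

Lemma reach_unfold t a : reach t a =
  App t a :: a :: App t (Last t) :: Last t :: reach_below t a ++ reach_below t (Last t).
Proof. destruct t; reflexivity. Qed.

Lemma in_reach_head t a b : b = a \/ b = Last t -> In (App t b) (reach t a).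
Proof. rewrite reach_unfold. intros [-> | ->]; simpl; auto. Qed.

Lemma in_reach_below t a b s : b = a \/ b = Last t ->
  In s (reach_below t b) -> In s (reach t a).
Proof.
  rewrite reach_unfold. intros Hb Hs. do 4 right.
  apply in_app_iff. destruct Hb as [-> | ->]; auto.
Qed.

Definition reach_closed t := forall a s s', In s (reach t a) -> step s s' ->
  In s' (reach t a) \/ s = a.

Definition below_closed t := forall b s s', In s (reach_below t b) -> step s s' ->
  In s' (reach_below t b) \/ s = b \/ s = App t b \/ s' = App t b.

Lemma reach_head_step t a b s' : b = a \/ b = Last t -> step (App t b) s' ->
  In s' (reach t a).
Proof.
  intros Hb Hs. inversion Hs; subst;
    try (apply (in_reach_below _ a b _ Hb); simpl; rewrite ?in_app_iff;
         rewrite ?reach_unfold; simpl; tauto).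
  - rewrite reach_unfold. destruct Hb as [-> | ->]; simpl; auto.
  - apply in_reach_head; auto.
Qed.

Lemma reach_closed_of_below t : below_closed t -> reach_closed t.
Proof.
  intros Hbelow a s s' Hs Hstep. rewrite reach_unfold in Hs.
  assert (NoLast : forall s'', ~ step (Last t) s'') by (intros ? H; inversion H).
  destruct Hs as [<- | [<- | [<- | [<- | Hs]]]].
  - left. apply (reach_head_step t a a); auto.
  - auto.
  - left. apply (reach_head_step t a (Last t)); auto.
  - exfalso. eapply NoLast; eauto.
  - assert (Hb : exists b, (b = a \/ b = Last t) /\ In s (reach_below t b))
      by (apply in_app_iff in Hs; destruct Hs; eauto).
    destruct Hb as [b [Hb Hsb]].
    destruct (Hbelow b s s' Hsb Hstep) as [H | [-> | [-> | ->]]].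
    + left. apply (in_reach_below t a b); auto.
    + destruct Hb as [-> | ->]; auto. exfalso. eapply NoLast; eauto.
    + left. apply (reach_head_step t a b); auto.
    + left. apply in_reach_head; auto.
Qed.

Lemma below_closed_comp t u : reach_closed t -> reach_closed u ->
  below_closed (Comp t u).
Proof.
  intros Ht Hu b s s' Hs Hstep. simpl in *. rewrite in_app_iff in *.
  destruct Hs as [Hs | Hs].
  - destruct (Ht _ _ _ Hs Hstep) as [H | ->]; auto.
    destruct (Hu b _ _ (in_reach_head u b b (or_introl eq_refl)) Hstep); auto.
  - destruct (Hu _ _ _ Hs Hstep) as [H | ->]; auto.
Qed.

Lemma below_closed_o t : reach_closed t -> below_closed (TO t).
Proof. intros Ht b s s' Hs Hstep. destruct (Ht _ _ _ Hs Hstep); auto. Qed.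

Lemma below_closed_residual t T (c : sample -> sample) : reach_closed t ->
  (forall x s', step (c x) s' -> s' = x) ->
  (forall b, reach_below T b = reach t (App T b) ++ reach t (c (App T b))) ->
  below_closed T.
Proof.
  intros Ht Hc HT b s s' Hs Hstep. rewrite HT, in_app_iff in *.
  destruct Hs as [Hs | Hs]; destruct (Ht _ _ _ Hs Hstep) as [H | ->]; auto.
Qed.

Lemma reach_closed_all t : reach_closed t.
Proof.
  induction t; apply reach_closed_of_below.
  - intros b s s' [].
  - apply below_closed_comp; auto.
  - apply below_closed_o; auto.
  - apply (below_closed_residual t (TL t) Pr); auto.
    intros x s' H. inversion H; auto.
  - apply (below_closed_residual t (TR t) Sc); auto.
    intros x s' H. inversion H; auto.
  - intros b s s' [].
  - intros b s s' [].
Qed.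

Lemma saturation_in_reach ts k s :
  saturation (fun s => exists t, In t ts /\ s = App t (Kv k)) s ->
  In s (flat_map (fun t => reach t (Kv k)) ts).
Proof.
  intros [b [[t [Ht ->]] Hr]]. apply clos_rt_rtn1 in Hr.
  induction Hr as [|x y Hxy _ IH].
  - apply in_flat_map. exists t. split; auto. apply in_reach_head; auto.
  - apply in_flat_map in IH. destruct IH as [t' [Ht' Hx]].
    apply in_flat_map. exists t'. split; auto.
    destruct (reach_closed_all t' _ _ _ Hx Hxy) as [H | ->]; auto.
    inversion Hxy.
Qed.

(** * From diagrams to valuations *)

Section ResidualValues.
Variable f : ob -> ob.
Hypothesis Hf : is_warp f.

Lemma wo_Fin_eq n b : (b = Fin 0 \/ b = Om) -> (b = Om <-> f (Fin n) = Om) ->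
  wo f (Fin n) = b.
Proof.
  intros Hb Hiff. rewrite <- (wo_Fin_Om_iff f n Hf) in Hiff.
  destruct Hb as [-> | ->]; destruct (wo_0_or_Om f (Fin n) Hf) as [E|E];
    rewrite E in *; intuition discriminate.
Qed.

Lemma wo_Om_eq m : (wo f m = Fin 0 -> forall n, f (Fin n) <> Om) ->
  wo f Om = wo f m.
Proof.
  destruct (wo_0_or_Om f m Hf) as [E|E]; rewrite E; intros H.
  - apply wo_Om_0; auto.
  - apply (warp_Om_of_eq_Om _ (wo_warp f Hf) m), E.
Qed.

Lemma wr_Fin_eq p b : oble (f b) (Fin (S p)) ->
  (oblt b Om -> oblt (Fin (S p)) (f (oplus1 b))) -> wr f (Fin (S p)) = b.
Proof.
  intros Hle Hgt. apply ob_le_ext. intros v. rewrite le_wr_iff by auto. split.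
  - intros Hv. destruct b as [j|]; [|apply oble_Om].
    apply oble_Fin_iff. intros Hjv.
    apply oblt_nle in Hgt; [|apply oblt_Fin_Om]. apply Hgt.
    exact (oble_trans _ _ _ (warp_mono f Hf _ _ Hjv) Hv).
  - intros Hv. exact (oble_trans _ _ _ (warp_mono f Hf _ _ Hv) Hle).
Qed.

Lemma wr_Om_eq m : (oblt (wr f m) Om -> f (oplus1 (wr f m)) = Om) ->
  wr f Om = wr f m.
Proof.
  intros H. apply oble_antisym; [|apply (warp_le_Om _ (wr_warp f Hf))].
  destruct (wr f m) as [j|] eqn:E; [|apply oble_Om].
  specialize (H (oblt_Fin_Om j)). simpl in H.
  apply (warp_Om_le _ (wr_warp f Hf)). intros [|n].
  - rewrite (warp_0 _ (wr_warp f Hf)). apply oble_0.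
  - apply oble_Fin_iff. rewrite le_wr_iff, H by auto. simpl; tauto.
Qed.

Lemma wr_Om_of_fin : (forall n, f (Fin n) <> Om) -> wr f Om = Om.
Proof.
  intros H. apply Fin_oble_all. intros N.
  destruct (f (Fin N)) as [c|] eqn:Ec; [|exfalso; eapply H; eauto].
  apply (oble_trans _ (wr f (Fin (S c)))); [|apply (warp_le_Om _ (wr_warp f Hf))].
  apply le_wr_iff; auto. rewrite Ec. simpl; lia.
Qed.

Lemma wr_Fin_not_Om n : f Om = Om -> wr f (Fin n) <> Om.
Proof.
  intros FO. destruct n as [|n]; [rewrite (warp_0 _ (wr_warp f Hf)); discriminate|].
  intros C. assert (H : oble Om (wr f (Fin (S n)))) by (rewrite C; exact I).
  apply le_wr_iff in H; auto. rewrite FO in H. exact H.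
Qed.

Lemma wl_Fin_eq p b : (oblt b Om -> oble (Fin (S p)) (f b)) ->
  (oblt b Om -> oblt (f (ominus1 b)) (Fin (S p))) ->
  (b = Om -> oblt (f Om) (Fin (S p))) -> wl f (Fin (S p)) = b.
Proof.
  intros Hge Hpred HOm. apply ob_le_ext. intros v. rewrite le_wl_iff.
  destruct b as [j|].
  - specialize (Hge (oblt_Fin_Om j)). specialize (Hpred (oblt_Fin_Om j)). split.
    + intros Hv. apply Hv, Hge.
    + intros Hv r Hr. apply (oble_trans _ _ _ Hv). destruct j as [|j]; [apply oble_0|].
      apply Fin_S_oble_iff. intros Hrj. apply oblt_nle in Hpred. apply Hpred.
      exact (oble_trans _ _ _ Hr (warp_mono f Hf _ _ Hrj)).
  - specialize (HOm eq_refl). split; [intros; apply oble_Om|].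
    intros _ r Hr. exfalso. apply oblt_nle in HOm. apply HOm.
    exact (oble_trans _ _ _ Hr (warp_le_Om f Hf r)).
Qed.

Lemma wl_Om_eq m : (oblt (wl f m) Om -> f (wl f m) = Om) -> wl f Om = wl f m.
Proof.
  intros H. apply oble_antisym; [|apply (warp_le_Om _ (wl_warp f))].
  destruct (wl f m) as [j|] eqn:E; [|apply oble_Om].
  specialize (H (oblt_Fin_Om j)).
  apply (warp_Om_le _ (wl_warp f)). intros [|n].
  - rewrite (warp_0 _ (wl_warp f)). apply oble_0.
  - apply (proj1 (le_wl_iff f n _) (oble_refl _)). rewrite H. apply oble_Om.
Qed.

Lemma wl_Om_of_fin : (forall n, f (Fin n) <> Om) -> wl f Om = Om.
Proof.
  intros H. destruct (wl f Om) as [c|] eqn:E; auto.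
  exfalso. apply (H c), wl_Om_Fin; auto.
Qed.

Lemma wl_Fin_not_Om n : f Om = Om -> wl f (Fin n) <> Om.
Proof.
  intros FO. destruct n as [|n]; [rewrite (warp_0 _ (wl_warp f)); discriminate|].
  intros C. destruct (warp_Om_approx f Hf (S n)) as [m Hm]; [rewrite FO; exact I|].
  assert (H : oble Om (wl f (Fin (S n)))) by (rewrite C; exact I).
  rewrite le_wl_iff in H. exact (H _ Hm).
Qed.
End ResidualValues.

Section Interpolation.
Variables (D : sample -> Prop) (d : sample -> ob) (M : nat).
Hypothesis HD : forall s s', D s -> step s s' -> D s'.
Hypothesis HM : forall s n, D s -> d s = Fin n -> n <= M.
Hypothesis Hd : is_diagram D d.

Local Ltac from_diagram :=
  destruct Hd as (?&?&?&?&?&?&?&?&?&?&?&?&?&?&?&?&?&?&?&?&?&?&?); assumption.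
Let HS1 : S1 D d. Proof. from_diagram. Qed.
Let HS2 : S2 D d. Proof. from_diagram. Qed.
Let HS3 : S3 D d. Proof. from_diagram. Qed.
Let HS4 : S4 D d. Proof. from_diagram. Qed.
Let HS5 : S5 D d. Proof. from_diagram. Qed.
Let HS6 : S6 D d. Proof. from_diagram. Qed.
Let HL1 : L1 D d. Proof. from_diagram. Qed.
Let HL2 : L2 D d. Proof. from_diagram. Qed.
Let HL3 : L3 D d. Proof. from_diagram. Qed.
Let HL4 : L4 D d. Proof. from_diagram. Qed.
Let HO1 : O1 D d. Proof. from_diagram. Qed.
Let HO2 : O2 D d. Proof. from_diagram. Qed.
Let HO3 : O3 D d. Proof. from_diagram. Qed.
Let HO4 : O4 D d. Proof. from_diagram. Qed.
Let HR1 : R1 D d. Proof. from_diagram. Qed.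
Let HR2 : R2 D d. Proof. from_diagram. Qed.
Let HR3 : R3 D d. Proof. from_diagram. Qed.
Let HR4 : R4 D d. Proof. from_diagram. Qed.
Let HLa1 : La1 D d. Proof. from_diagram. Qed.
Let HLa2 : La2 D d. Proof. from_diagram. Qed.
Let HLa3 : La3 D d. Proof. from_diagram. Qed.
Let HLa4 : La4 D d. Proof. from_diagram. Qed.
Let HLa5 : La5 D d. Proof. from_diagram. Qed.

Local Ltac step_from H := apply (HD _ _ H); constructor.

Lemma D_arg t a : D (App t a) -> D a.
Proof. intros H. step_from H. Qed.

Lemma D_app_last t a : D (App t a) -> D (App t (Last t)).
Proof. intros H. step_from H. Qed.

Lemma D_last t a : D (App t a) -> D (Last t).
Proof. intros H. apply (D_arg t), (D_app_last t a H). Qed.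

Lemma app_le_app_last t a : D (App t a) -> oble (d (App t a)) (d (App t (Last t))).
Proof.
  intros H. pose proof (HS5 t a H (D_arg _ _ H) (D_last _ _ H) (D_app_last _ _ H)) as E.
  destruct (oble_total (d (Last t)) (d a)) as [Hle|Hle].
  - rewrite (proj1 E Hle). apply oble_refl.
  - apply HS1; eauto using D_arg, D_app_last, D_last.
Qed.

Lemma app_eq_app_last t a : D (App t a) -> d a = Om -> d (App t a) = d (App t (Last t)).
Proof.
  intros H Ha. apply (HS5 t a H (D_arg _ _ H) (D_last _ _ H) (D_app_last _ _ H)).
  rewrite Ha. apply oble_Om.
Qed.

Definition occurs t := exists a, D (App t a).

Definition app_sup t (r : ob) : ob :=
  ob_sup (fun v => exists a, D (App t a) /\ oble (d a) r /\ v = d (App t a)).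

(* A term that never reaches its top ([d (Last t) = Om]) needs an interpolant
   that is finite on finite arguments yet unbounded: above the bound [M] on the
   finite diagram values it continues as the identity. *)
Definition interpolant t (r : ob) : ob :=
  match r, d (Last t) with
  | Fin p, Om => if Nat.leb p M then app_sup t r else r
  | _, _ => app_sup t r
  end.

Lemma app_sup_app t a : D (App t a) -> app_sup t (d a) = d (App t a).
Proof.
  intros H. apply oble_antisym.
  - apply ob_sup_le. intros v [b [Hb [Hba ->]]].
    apply HS1; eauto using D_arg.
  - apply ob_le_sup. exists a. split; [|split]; auto using oble_refl.
Qed.

Lemma app_sup_mono t r r' : oble r r' -> oble (app_sup t r) (app_sup t r').
Proof.
  intros Hr. apply ob_sup_le. intros v [a [Ha [Har ->]]].
  apply ob_le_sup. exists a. eauto using oble_trans.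
Qed.

Lemma app_sup_0 t : app_sup t (Fin 0) = Fin 0.
Proof.
  apply oble_0_eq, ob_sup_le. intros v [a [Ha [Ha0 ->]]].
  rewrite (HS2 t a Ha (D_arg _ _ Ha) (oble_0_eq _ Ha0)). apply oble_refl.
Qed.

Lemma app_sup_le_last t r : oble (app_sup t r) (d (App t (Last t))).
Proof. apply ob_sup_le. intros v [a [Ha [_ ->]]]. apply app_le_app_last, Ha. Qed.

Lemma app_sup_Fin_le_M t p : d (Last t) = Om -> oble (app_sup t (Fin p)) (Fin M).
Proof.
  intros HL. apply ob_sup_le. intros v [a [Ha [Hap ->]]].
  destruct (d (App t a)) as [m|] eqn:E; [apply (HM _ _ Ha E)|].
  assert (HT : d (App t (Last t)) = Om)
    by (apply HS6; eauto using D_last, D_app_last).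
  rewrite <- HT in E.
  apply (HS5 t a Ha (D_arg _ _ Ha) (D_last _ _ Ha) (D_app_last _ _ Ha)) in E.
  rewrite HL in E. exact (oble_trans _ _ _ E Hap).
Qed.

Lemma interpolant_below t p : (d (Last t) = Om -> p <= M) ->
  interpolant t (Fin p) = app_sup t (Fin p).
Proof.
  unfold interpolant. destruct (d (Last t)); auto. intros Hp.
  rewrite (proj2 (Nat.leb_le p M) (Hp eq_refl)). reflexivity.
Qed.

Lemma interpolant_above t p : d (Last t) = Om -> M < p -> interpolant t (Fin p) = Fin p.
Proof.
  unfold interpolant. intros -> Hp. destruct (Nat.leb_spec p M); auto. lia.
Qed.

Lemma interpolant_app t a : D (App t a) -> interpolant t (d a) = d (App t a).
Proof.
  intros H. rewrite <- (app_sup_app t a H). destruct (d a) as [p|] eqn:Ea.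
  - apply interpolant_below. intros _. apply (HM a); eauto using D_arg.
  - reflexivity.
Qed.

Lemma interpolant_Fin_not_Om t n : d (Last t) = Om -> interpolant t (Fin n) <> Om.
Proof.
  intros HL. destruct (Nat.leb_spec n M).
  - rewrite interpolant_below by auto. intros C.
    pose proof (app_sup_Fin_le_M t n HL) as B. rewrite C in B. exact B.
  - rewrite interpolant_above by auto. discriminate.
Qed.

Section Occurring.
Variable t : term.
Hypothesis Ht : occurs t.

Lemma app_sup_Om : app_sup t Om = d (App t (Last t)).
Proof.
  destruct Ht as [a Ha]. apply oble_antisym; [apply app_sup_le_last|].
  rewrite <- (app_sup_app t (Last t)); [|eapply D_app_last; eauto].
  apply app_sup_mono, oble_Om.
Qed.

Lemma app_sup_Om_last_Om : d (Last t) = Om -> app_sup t Om = Om.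
Proof.
  intros HL. destruct Ht as [a Ha].
  rewrite app_sup_Om. apply HS6; eauto using D_last, D_app_last.
Qed.

Lemma interpolant_le_Om r : oble (interpolant t r) (interpolant t Om).
Proof.
  destruct r as [p|]; [|apply oble_refl]. simpl.
  destruct (d (Last t)) eqn:HL.
  - apply app_sup_mono, oble_Om.
  - rewrite app_sup_Om_last_Om; auto. apply oble_Om.
Qed.

Lemma interpolant_warp : is_warp (interpolant t).
Proof.
  split; [|split; [|split]].
  - intros [p|] [p'|] Hp; try apply interpolant_le_Om; [|destruct Hp].
    destruct (d (Last t)) eqn:HL;
      [rewrite !interpolant_below by congruence; apply app_sup_mono, Hp|].
    simpl in Hp. destruct (Nat.leb_spec p M), (Nat.leb_spec p' M);
      rewrite ?interpolant_below, ?interpolant_above by auto.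
    + apply app_sup_mono, Hp.
    + apply (oble_trans _ _ _ (app_sup_Fin_le_M t p HL)). simpl; lia.
    + lia.
    + exact Hp.
  - rewrite interpolant_below; [apply app_sup_0 | lia].
  - intros n. apply interpolant_le_Om.
  - intros b Hb. simpl. destruct (d (Last t)) as [l|] eqn:HL.
    + rewrite app_sup_Om, <- (app_sup_app t (Last t)), HL.
      * rewrite <- interpolant_below by congruence. apply Hb.
      * destruct Ht as [a Ha]. eapply D_app_last; eauto.
    + rewrite app_sup_Om_last_Om; auto. destruct b as [c|]; [|exact I].
      specialize (Hb (S (Nat.max c M))).
      rewrite interpolant_above in Hb by (auto; lia). simpl in Hb; lia.
Qed.
End Occurring.

Definition diagram_valuation (x : nat) : ob -> ob :=
  match excluded_middle_informative (occurs (Var x)) with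
  | left _ => interpolant (Var x)
  | right _ => wid
  end.

Lemma diagram_valuation_warp x : is_warp (diagram_valuation x).
Proof.
  unfold diagram_valuation. destruct excluded_middle_informative;
    auto using interpolant_warp, warp_id.
Qed.

Local Notation V := diagram_valuation.

Definition eval_agrees t :=
  forall a, D (App t a) -> eval V t (d a) = d (App t a).

Definition eval_fin_if_last_Om t :=
  forall a, D (App t a) -> d (Last t) = Om -> forall n, eval V t (Fin n) <> Om.

Lemma eval_V_warp t : is_warp (eval V t).
Proof. apply eval_warp, diagram_valuation_warp. Qed.

Lemma eval_Om_if_last_Om t a : eval_agrees t -> D (App t a) -> d (Last t) = Om ->
  eval V t Om = Om.
Proof.
  intros Ht H HL. rewrite <- HL at 1. rewrite (Ht _ (D_app_last _ _ H)).
  apply HS6; eauto using D_last, D_app_last.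
Qed.

Lemma eval_var x : eval_agrees (Var x) /\ eval_fin_if_last_Om (Var x).
Proof.
  assert (E : forall a, D (App (Var x) a) -> eval V (Var x) = interpolant (Var x)).
  { intros a H. simpl. unfold diagram_valuation.
    destruct excluded_middle_informative as [_|N]; auto.
    exfalso. apply N. exists a; auto. }
  split.
  - intros a H. rewrite (E a H). apply interpolant_app, H.
  - intros a H HL n. rewrite (E a H). apply interpolant_Fin_not_Om, HL.
Qed.

Lemma eval_id : eval_agrees Tid /\ eval_fin_if_last_Om Tid.
Proof.
  split.
  - intros a H. symmetry. apply HL1; eauto using D_arg.
  - intros a H HL n. discriminate.
Qed.

Lemma eval_bot : eval_agrees Tbot /\ eval_fin_if_last_Om Tbot.
Proof.
  split.
  - intros a H. simpl. unfold wbot.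
    assert (HL : d (Last Tbot) = Fin 0) by (apply (HL2 a); eauto using D_last).
    rewrite (proj1 (HS5 Tbot a H (D_arg _ _ H) (D_last _ _ H) (D_app_last _ _ H)))
      by (rewrite HL; apply oble_0).
    symmetry. apply HS2; eauto using D_last, D_app_last.
  - intros a H HL n. discriminate.
Qed.

Lemma eval_comp t u : eval_agrees t -> eval_fin_if_last_Om t ->
  eval_agrees u -> eval_fin_if_last_Om u ->
  eval_agrees (Comp t u) /\ eval_fin_if_last_Om (Comp t u).
Proof.
  intros Ht Htf Hu Huf. split.
  - intros a H. simpl. unfold wcomp.
    assert (H1 : D (App t (App u a))) by step_from H.
    assert (H2 : D (App u a)) by (apply (D_arg t), H1).
    rewrite (Hu a H2), (Ht _ H1). symmetry. apply HL3; auto.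
  - intros a H HL n. simpl. unfold wcomp.
    assert (H0 : D (App (Comp t u) (Last (Comp t u)))) by step_from H.
    assert (H1 : D (App t (App u (Last (Comp t u))))) by step_from H0.
    assert (H2 : D (App u (Last (Comp t u)))) by (apply (D_arg t), H1).
    destruct (HL4 t u H0 (D_last _ _ H0) (D_last _ _ H1) (D_last _ _ H2) HL)
      as [HLt HLu].
    destruct (eval V u (Fin n)) as [m|] eqn:E.
    + apply (Htf _ H1 HLt).
    + exfalso. apply (Huf _ H2 HLu n E).
Qed.

Lemma eval_TO_Fin t a : eval_agrees t -> D (App (TO t) a) -> oblt (d a) Om ->
  eval V (TO t) (d a) = d (App (TO t) a).
Proof.
  intros Ht H Ha. destruct (oblt_Om_Fin _ Ha) as [n En]. simpl. rewrite En.
  apply (wo_Fin_eq _ (eval_V_warp t)); [apply HO1, H|].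
  assert (H1 : D (App t a)) by step_from H.
  rewrite <- En, (Ht a H1). apply HO2; eauto using D_arg.
Qed.

Lemma eval_o t : eval_agrees t -> eval_fin_if_last_Om t ->
  eval_agrees (TO t) /\ eval_fin_if_last_Om (TO t).
Proof.
  intros Ht Htf. assert (Hf := eval_V_warp t). split.
  - intros a H. destruct (ob_Fin_or_Om (d a)) as [[n Ea] | Ea];
      [apply eval_TO_Fin; auto; rewrite Ea; apply oblt_Fin_Om|].
    assert (Hl : D (App (TO t) (Last (TO t)))) by step_from H.
    assert (H1 : D (App t a)) by step_from H.
    pose proof (eval_TO_Fin t _ Ht Hl (HO3 t (D_last _ _ H))) as Elast.
    simpl in Elast |- *. rewrite Ea, (app_eq_app_last _ _ H Ea), <- Elast.
    apply (wo_Om_eq _ Hf). intros Hz n Hn.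
    destruct (ob_Fin_or_Om (d (Last t))) as [[l HL] | HL]; [|exact (Htf a H1 HL n Hn)].
    assert (Hlt : oblt (d (App t (Last t))) Om).
    { apply (HO4 t (Last t)); eauto using D_app_last, D_last.
      - rewrite <- Elast, Hz. apply oblt_Fin_Om.
      - rewrite HL. apply oblt_Fin_Om. }
    rewrite <- (app_eq_app_last _ _ H1 Ea), <- (Ht _ H1), Ea in Hlt.
    destruct Hlt as [_ C]. apply C, (warp_Om_of_eq_Om _ Hf _ Hn).
  - intros a H HL. exfalso. destruct (HO3 t (D_last _ _ H)) as [_ C]. exact (C HL).
Qed.

Lemma eval_TR_Fin t a : eval_agrees t -> D (App (TR t) a) -> oblt (d a) Om ->
  eval V (TR t) (d a) = d (App (TR t) a).
Proof.
  intros Ht H Ha. assert (Hf := eval_V_warp t). simpl.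
  assert (H1 : D (App t (App (TR t) a))) by step_from H.
  assert (H2 : D (App t (Sc (App (TR t) a)))) by step_from H.
  destruct (oblt_Om_Fin _ Ha) as [[|p] Ea]; rewrite Ea.
  - rewrite (warp_0 _ (wr_warp _ Hf)). symmetry. apply HS2; eauto using D_arg.
  - apply (wr_Fin_eq _ Hf).
    + rewrite (Ht _ H1), <- Ea. apply HR1; eauto using D_arg.
    + intros Hlt. rewrite <- (HS4 _ (D_arg _ _ H2) H), (Ht _ H2), <- Ea.
      apply HR2; eauto using D_arg. rewrite Ea. apply oblt_nle; simpl; lia.
Qed.

Lemma last_TR_Om t a : D (App (TR t) a) -> d (Last (TR t)) = Om -> d (Last t) = Om.
Proof.
  intros H. assert (H1 : D (App t (App (TR t) a))) by step_from H.
  apply HR3; eauto using D_last, D_app_last.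
Qed.

Lemma eval_r t : eval_agrees t -> eval_fin_if_last_Om t ->
  eval_agrees (TR t) /\ eval_fin_if_last_Om (TR t).
Proof.
  intros Ht Htf. assert (Hf := eval_V_warp t). split.
  - intros a H. destruct (ob_Fin_or_Om (d a)) as [[n Ea] | Ea];
      [apply eval_TR_Fin; auto; rewrite Ea; apply oblt_Fin_Om|].
    assert (Hl : D (App (TR t) (Last (TR t)))) by step_from H.
    simpl. rewrite Ea, (app_eq_app_last _ _ H Ea).
    destruct (ob_Fin_or_Om (d (Last (TR t)))) as [[m Em] | Em].
    + assert (Elast : wr (eval V t) (d (Last (TR t))) = d (App (TR t) (Last (TR t))))
        by (apply (eval_TR_Fin t _ Ht Hl); rewrite Em; apply oblt_Fin_Om).
      rewrite <- Elast. apply (wr_Om_eq _ Hf). intros Hlt.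
      assert (H4 : D (App t (Sc (App (TR t) (Last (TR t)))))) by step_from Hl.
      rewrite Elast in *.
      rewrite <- (HS4 _ (D_arg _ _ H4) Hl), (Ht _ H4). apply HR4; auto.
    + assert (H1 : D (App t (App (TR t) a))) by step_from H.
      rewrite (HS6 _ (D_last _ _ H) Hl Em). apply (wr_Om_of_fin _ Hf).
      apply (Htf _ H1), (last_TR_Om t a H Em).
  - intros a H HL n. simpl. apply (wr_Fin_not_Om _ Hf).
    assert (H1 : D (App t (App (TR t) a))) by step_from H.
    apply (eval_Om_if_last_Om t _ Ht H1), (last_TR_Om t a H HL).
Qed.

Lemma eval_TL_Fin t a : eval_agrees t -> D (App (TL t) a) -> oblt (d a) Om ->
  eval V (TL t) (d a) = d (App (TL t) a).
Proof.
  intros Ht H Ha. assert (Hf := eval_V_warp t). simpl.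
  assert (H1 : D (App t (App (TL t) a))) by step_from H.
  assert (H2 : D (App t (Pr (App (TL t) a)))) by step_from H.
  destruct (oblt_Om_Fin _ Ha) as [[|p] Ea]; rewrite Ea.
  - rewrite (warp_0 _ (wl_warp _)). symmetry. apply HS2; eauto using D_arg.
  - assert (Hpos : oblt (Fin 0) (d a)) by (rewrite Ea; apply oblt_nle; simpl; lia).
    apply (wl_Fin_eq _ Hf); rewrite <- Ea.
    + intros Hlt. rewrite (Ht _ H1). apply HLa1; eauto using D_arg.
    + intros Hlt. rewrite <- (HS3 _ (D_arg _ _ H2) H), (Ht _ H2).
      apply HLa2; eauto using D_arg.
    + intros HOm. rewrite <- HOm at 1. rewrite (Ht _ H1).
      apply HLa3; eauto using D_arg.
Qed.

Lemma last_TL_Om t a : D (App (TL t) a) -> d (Last (TL t)) = Om -> d (Last t) = Om.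
Proof.
  intros H. assert (H1 : D (App t (App (TL t) a))) by step_from H.
  apply HLa4; eauto using D_last, D_app_last.
Qed.

Lemma eval_l t : eval_agrees t -> eval_fin_if_last_Om t ->
  eval_agrees (TL t) /\ eval_fin_if_last_Om (TL t).
Proof.
  intros Ht Htf. assert (Hf := eval_V_warp t). split.
  - intros a H. destruct (ob_Fin_or_Om (d a)) as [[n Ea] | Ea];
      [apply eval_TL_Fin; auto; rewrite Ea; apply oblt_Fin_Om|].
    assert (Hl : D (App (TL t) (Last (TL t)))) by step_from H.
    simpl. rewrite Ea, (app_eq_app_last _ _ H Ea).
    destruct (ob_Fin_or_Om (d (Last (TL t)))) as [[m Em] | Em].
    + assert (Elast : wl (eval V t) (d (Last (TL t))) = d (App (TL t) (Last (TL t))))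
        by (apply (eval_TL_Fin t _ Ht Hl); rewrite Em; apply oblt_Fin_Om).
      rewrite <- Elast. apply wl_Om_eq. intros Hlt.
      assert (H4 : D (App t (App (TL t) (Last (TL t))))) by step_from Hl.
      rewrite Elast in *. rewrite (Ht _ H4). apply HLa5; auto.
    + assert (H1 : D (App t (App (TL t) a))) by step_from H.
      rewrite (HS6 _ (D_last _ _ H) Hl Em). apply (wl_Om_of_fin _ Hf).
      apply (Htf _ H1), (last_TL_Om t a H Em).
  - intros a H HL n. simpl. apply (wl_Fin_not_Om _ Hf).
    assert (H1 : D (App t (App (TL t) a))) by step_from H.
    apply (eval_Om_if_last_Om t _ Ht H1), (last_TL_Om t a H HL).
Qed.

Lemma eval_diagram t : eval_agrees t /\ eval_fin_if_last_Om t.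
Proof.
  induction t as [x | t [Ht Htf] u [Hu Huf] | t [Ht Htf] | t [Ht Htf] | t [Ht Htf] | |].
  - apply eval_var.
  - apply eval_comp; auto.
  - apply eval_o; auto.
  - apply eval_l; auto.
  - apply eval_r; auto.
  - apply eval_id.
  - apply eval_bot.
Qed.

Lemma diagram_valuation_realizes t a : D (App t a) -> eval V t (d a) = d (App t a).
Proof. apply eval_diagram. Qed.

End Interpolation.

Lemma saturation_step_closed S s s' : saturation S s -> step s s' -> saturation S s'.
Proof.
  intros [b [Hb Hr]] Hs. exists b. split; auto.
  eapply rt_trans; eauto. apply rt_step, Hs.
Qed.

Lemma fin_values_bounded (d : sample -> ob) (L : list sample) :
  exists M, forall s n, In s L -> d s = Fin n -> n <= M.
Proof.
  induction L as [|s L [M HM]]; [exists 0; intros ? ? []|].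
  exists (match d s with Fin n => Nat.max n M | Om => M end).
  intros s' n [<- | Hs'] E; [rewrite E; lia|].
  specialize (HM _ _ Hs' E). destruct (d s); lia.
Qed.

Theorem theorem3p19 (ts : list term) (k : nat) :
  (exists th : nat -> ob -> ob, (forall x, is_warp (th x)) /\
     exists p : ob, forall t, In t ts -> oblt (eval th t p) p)
  <->
  (exists d : sample -> ob,
     is_diagram (saturation (fun s => exists t, In t ts /\ s = App t (Kv k))) d /\
     forall t, In t ts -> oblt (d (App t (Kv k))) (d (Kv k))).
Proof.
  split.
  - intros [th [Hth [p Hp]]]. exists (sample_value th p). split.
    + apply sample_value_diagram, Hth.
    + exact Hp.
  - intros [d [Hd Hlt]].
    set (D := saturation _) in Hd.
    destruct (fin_values_bounded d (flat_map (fun t => reach t (Kv k)) ts)) as [M HM].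
    assert (HDM : forall s n, D s -> d s = Fin n -> n <= M)
      by (intros s n Hs; apply HM, saturation_in_reach, Hs).
    assert (HD := saturation_step_closed (fun s => exists t, In t ts /\ s = App t (Kv k))).
    exists (diagram_valuation D d M).
    split; [apply diagram_valuation_warp; auto|].
    exists (d (Kv k)). intros t Ht.
    rewrite (diagram_valuation_realizes D d M HD HDM Hd t (Kv k)); auto.
    exists (App t (Kv k)). split; eauto using rt_refl.
Qed.
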